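(* Let $N\ge 2$ and $T\ge 1$ be integers, let $a_1,\ldots,a_N$ be real numbers with $a_1+\cdots+a_N=1$, and let $\mu_1,\ldots,\mu_T$ be real numbers. Let $J$ be the $((N-1)T+1)\times((N-1)T+1)$ real matrix defined as follows (with $e_k$ denoting the $k$-th standard basis row vector of length $(N-1)T+1$): - for $i=1,\ldots,(N-2)T+1$, the $i$-th row of $J$ is $e_{i+T}$; - for $m=1,\ldots,T$, the $((N-2)T+1+m)$-th row of $J$ is $r_m$, where $r_0:=e_{(N-1)T+1}$ and recursively $$r_m=\mu_m\Big(a_1\, r_{m-1}+\sum_{l=2}^{N} a_l\, e_{(N-l)T+m}\Big),\qquad m=1,\ldots,T.$$ Then the eigenvalues of $J$ are precisely the (complex) roots of the polynomial $$p(\lambda)=\lambda^{(N-1)T+1}-(\mu_1\cdots\mu_T)\,\big(a_1\lambda^{N-1}+a_2\lambda^{N-2}+\cdots+a_{N-1}\lambda+a_N\big)^{T}.$$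
   Context: Motivation/setting: for a $C^1$ map $f:\mathbb{R}\to\mathbb{R}$ with a $T$-cycle $x_0^*,\ldots,x_{T-1}^*$ and the delayed feedback control $x(k+1)=f(x(k))+u(k)$, $u(k)=(a_1-1)f(x(k))+a_2f(x(k-T))+\cdots+a_Nf(x(k-(N-1)T))$, define $G:\mathbb{R}^{(N-1)T+1}\to\mathbb{R}^{(N-1)T+1}$ by $G(x_1,\ldots,x_{(N-1)T+1})=(x_2,\ldots,x_{(N-1)T+1},\,a_1f(x_{(N-1)T+1})+a_2f(x_{(N-2)T+1})+\cdots+a_Nf(x_1))$ and $F=G^T$. The matrix $J$ above is the Jacobian of $F$ at the point $(x_0^*,x_1^*,\ldots,x^*_{(N-1)T})$ (indices mod $T$), with $\mu_j$ the derivatives of $f$ along the cycle; however the statement concerns the explicitly defined matrix for arbitrary real $\mu_j$. *)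

From mathcomp Require Import all_boot all_order all_algebra.
From mathcomp.real_closed Require Import complex.
From mathcomp Require Import reals.
Set Implicit Arguments. Unset Strict Implicit. Unset Printing Implicit Defensive.
Import Order.TTheory GRing.Theory Num.Theory.
Local Open Scope ring_scope.

Notation dimJ N T := ((N.-1 * T)%N.+1).

(* e_k : k-th standard basis row vector, 1-based index k (1 <= k <= (N-1)T+1) *)
Definition ebasis {R : nzRingType} (n : nat) (k : nat) : 'rV[R]_n.+1 :=
  delta_mx 0 (inord k.-1).

Fixpoint rrow {R : nzRingType} (N T : nat) (a mu : nat -> R) (m : nat)
  : 'rV[R]_(dimJ N T) :=
  match m with
  | 0 => ebasis (N.-1 * T) (N.-1 * T).+1
  | m'.+1 => mu m *: (a 1%N *: rrow N T a mu m'
                     + \sum_(2 <= l < N.+1) a l *: ebasis (N.-1 * T) ((N - l) * T + m))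
  end.

(* J (0-based row index i): row i+1 (1-based) is e_{i+1+T} when i+1 <= (N-2)T+1,
   otherwise row (N-2)T+1+m is r_m with m = i - (N-2)T. *)
Definition Jmat {R : nzRingType} (N T : nat) (a mu : nat -> R) : 'M[R]_(dimJ N T) :=
  \matrix_(i, j) (if (i < (N - 2) * T + 1)%N
                  then ebasis (N.-1 * T) (i + 1 + T) 0 j
                  else rrow N T a mu (i - (N - 2) * T) 0 j).

Definition pchar {R : nzRingType} (N T : nat) (a mu : nat -> R) : {poly R} :=
  'X^(dimJ N T) - (\prod_(1 <= m < T.+1) mu m)%:P
                  * (\sum_(1 <= l < N.+1) a l *: 'X^(N - l)) ^+ T.

From mathcomp Require Import all_boot all_order all_algebra.
From mathcomp.real_closed Require Import complex.
From mathcomp Require Import reals.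
From mathcomp Require Import ring zify.
Import Order.TTheory GRing.Theory Num.Theory.
Local Open Scope ring_scope.

(* A column vector f_0, ..., f_n (n = (N-1)T) is a lam-eigenvector of J iff its
   first (N-2)T+1 rows give f_(j+qT) = lam^q f_j for j < T, and its last T rows
   then reduce, with A = a_1 lam^(N-1) + ... + a_N, to the recurrence
   lam^(N-1) g_(m+1) = mu_(m+1) A g_m for g_m = f_m (m < T), g_T = lam f_0.
   Iterating it T times gives (lam^(n+1) - mu_1 ... mu_T A^T) f_0 = 0, which
   forces p(lam) = 0 for a nonzero f (directly when lam = 0); conversely, at a root
   of p the recurrence is solved explicitly (by a delta vector when lam = 0).
   Passing from R to C is functoriality of J and p under ring morphisms. *)

Lemma char_poly_trmx (R : comNzRingType) n (A : 'M[R]_n) :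
  char_poly A^T = char_poly A.
Proof.
rewrite /char_poly -det_tr; congr (\det _).
by apply/matrixP => i j; rewrite !mxE eq_sym.
Qed.

Lemma eigenvalue_colP (F : fieldType) n (A : 'M[F]_n) c :
  eigenvalue A c <-> exists2 w : 'cV_n, A *m w = c *: w & w != 0.
Proof.
rewrite eigenvalue_root_char -char_poly_trmx -eigenvalue_root_char.
split=> [/eigenvalueP[v vA v0] | [w Aw w0]].
  exists v^T; last by rewrite trmx_eq0.
  by rewrite -[A]trmxK -trmx_mul vA linearZ.
apply/eigenvalueP; exists w^T; last by rewrite trmx_eq0.
by rewrite -trmx_mul Aw linearZ.
Qed.

Section MapJmat.
Variables (R S : nzRingType) (phi : {rmorphism R -> S}) (N T : nat) (a mu : nat -> R).

Lemma map_rrow m : map_mx phi (rrow N T a mu m) = rrow N T (phi \o a) (phi \o mu) m.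
Proof.
elim: m => [|m IH] /=; first by rewrite map_delta_mx.
apply/matrixP => i j; rewrite !mxE rmorphM rmorphD rmorphM -IH mxE !summxE rmorph_sum.
by congr (_ * (_ + _)); apply: eq_bigr => l _; rewrite !mxE rmorphM rmorph_nat.
Qed.

Lemma map_Jmat : map_mx phi (Jmat N T a mu) = Jmat N T (phi \o a) (phi \o mu).
Proof.
apply/matrixP => i j; rewrite !mxE; case: ifP => _; first by rewrite rmorph_nat.
by rewrite -map_rrow mxE.
Qed.

Lemma map_pchar : map_poly phi (pchar N T a mu) = pchar N T (phi \o a) (phi \o mu).
Proof.
rewrite /pchar rmorphB rmorphM /= map_polyXn map_polyC rmorphXn rmorph_sum.
congr (_ - _ * _ ^+ _); first by congr (_%:P); exact: rmorph_prod.
by apply: eq_bigr => l _; rewrite /= map_polyZ map_polyXn.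
Qed.
End MapJmat.

Section JmatEigenvectors.
Variables (F : fieldType) (N T : nat) (a mu : nat -> F) (lam : F).
Hypotheses (N_ge2 : (2 <= N)%N) (T_gt0 : (0 < T)%N).
Local Notation n := (N.-1 * T)%N.

(* Coordinates are 0-based: [f k] pairs with [e_(k+1)], so [rrow_eval f m] is [r_m . f]. *)
Fixpoint rrow_eval (f : nat -> F) (m : nat) : F :=
  match m with
  | 0 => f n
  | m'.+1 => mu m * (a 1%N * rrow_eval f m'
                     + \sum_(2 <= l < N.+1) a l * f ((N - l) * T + m')%N)
  end.

Definition aeval := \sum_(1 <= l < N.+1) a l * lam ^+ (N - l).
Definition aeval_tail := \sum_(2 <= l < N.+1) a l * lam ^+ (N - l).

Lemma aevalE : aeval = a 1%N * lam ^+ N.-1 + aeval_tail.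
Proof. by rewrite /aeval big_ltn ?subn1 //; lia. Qed.

Lemma nE : n = ((N - 2) * T + T)%N.
Proof. have -> : N.-1 = (N - 2).+1 by lia. by rewrite mulSn addnC. Qed.

Definition eigen_eq (f : nat -> F) := forall k, (k <= n)%N ->
  (if (k < (N - 2) * T + 1)%N then f (k + T)%N else rrow_eval f (k - (N - 2) * T))
  = lam * f k.

Definition shift_eq (f : nat -> F) := forall q j, (j < T)%N -> (j + q * T <= n)%N ->
  f (j + q * T)%N = lam ^+ q * f j.

Definition fhead (f : nat -> F) m := if (m < T)%N then f m else lam * f 0%N.

Definition head_rec (f : nat -> F) := forall m, (m < T)%N ->
  lam ^+ N.-1 * fhead f m.+1 = mu m.+1 * aeval * fhead f m.

Lemma eigen_eq_shift {f} : eigen_eq f -> shift_eq f.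
Proof.
move=> hE; elim=> [|q IH] j hj hb; first by rewrite addn0 mul1r.
have hb' : (j + q * T + T <= n)%N by move: hb; rewrite mulSn; lia.
have -> : (j + q.+1 * T = j + q * T + T)%N by rewrite mulSn; lia.
have := hE (j + q * T)%N; rewrite ifT; last by move: hb'; rewrite nE; lia.
by move=> ->; [rewrite IH ?exprS ?mulrA //; lia | lia].
Qed.

Section Shifted.
Variables (f : nat -> F) (f_shift : shift_eq f).

Lemma rrow_eval0 : rrow_eval f 0 = lam ^+ N.-1 * f 0%N.
Proof. by have := f_shift N.-1 0 T_gt0 (leqnn _); rewrite add0n. Qed.

Lemma rrow_evalS m : (m < T)%N ->
  rrow_eval f m.+1 = mu m.+1 * (a 1%N * rrow_eval f m + aeval_tail * f m).
Proof.
move=> hm /=; congr (_ * (_ + _)); rewrite /aeval_tail mulr_suml.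
apply: eq_big_nat => l /andP[hl1 hl2].
have : ((N - l) * T <= (N - 2) * T)%N by apply: leq_mul => //; apply: leq_sub2l.
by move=> hle; rewrite addnC f_shift ?mulrA //; rewrite nE; lia.
Qed.

Lemma last_block m : (m < T)%N ->
  lam * f ((N - 2) * T + m.+1)%N = lam ^+ N.-1 * fhead f m.+1.
Proof.
move=> hm; rewrite /fhead; case: ifP => hm1.
  rewrite addnC f_shift //; last by rewrite nE; lia.
  have -> : N.-1 = (N - 2).+1 by lia.
  by rewrite exprS mulrA.
have -> : m.+1 = T by lia.
by rewrite -nE; have /= -> := rrow_eval0; rewrite mulrCA.
Qed.

Lemma head_recP : head_rec f <->
  (forall m, (m <= T)%N -> rrow_eval f m = lam ^+ N.-1 * fhead f m).
Proof.
have fheadE m : (m < T)%N -> fhead f m = f m by move=> hm; rewrite /fhead hm.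
split=> [hR | hrow m hm].
  elim=> [|m IH] hm; first by rewrite rrow_eval0 fheadE.
  rewrite rrow_evalS // (IH (ltnW hm)) hR // fheadE // aevalE; ring.
by rewrite -hrow // rrow_evalS // (hrow m (ltnW hm)) fheadE // aevalE; ring.
Qed.

End Shifted.

Lemma eigen_eqE f : eigen_eq f <-> shift_eq f /\ head_rec f.
Proof.
split=> [hE | [hS hR] k hk].
  have hS := eigen_eq_shift hE; split=> //; apply/(head_recP _ hS) => -[|m] hm.
    by rewrite rrow_eval0 // /fhead T_gt0.
  have := hE ((N - 2) * T + m.+1)%N; rewrite ifF; last by lia.
  rewrite addKn -last_block // => -> //; rewrite nE; lia.
case: ifP => hk1.
  have hk' := divn_eq k T; set q := (k %/ T)%N; set j := (k %% T)%N.
  have hj : (j < T)%N by rewrite ltn_mod.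
  have -> : (k + T = j + q.+1 * T)%N by rewrite mulSn; lia.
  rewrite hS //; last by rewrite mulSn; move: hk1; rewrite nE; lia.
  by rewrite [in RHS]hk' addnC hS ?exprS ?mulrA //; lia.
have -> : (k - (N - 2) * T = (k - (N - 2) * T - 1).+1)%N by lia.
have hkT : (k - (N - 2) * T - 1 < T)%N by move: hk; rewrite nE; lia.
rewrite (head_recP _ hS).1 // -last_block //.
by congr (_ * f _); lia.
Qed.

Lemma head_rec_iter {f} : head_rec f -> forall m, (m <= T)%N ->
  lam ^+ (N.-1 * m) * fhead f m = (\prod_(1 <= k < m.+1) (mu k * aeval)) * f 0%N.
Proof.
move=> hR; elim=> [|m IH] hm; first by rewrite big_geq // muln0 /fhead T_gt0 !mul1r.
rewrite mulnS exprD -mulrA mulrCA hR // mulrCA (IH (ltnW hm)).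
by rewrite [in RHS]big_nat_recr //=; ring.
Qed.

Definition head_eigen f :=
  [/\ shift_eq f, head_rec f & exists2 j, (j < T)%N & f j != 0].

Local Notation char_prod := (\prod_(1 <= k < T.+1) (mu k * aeval)).

Lemma char_eq_of_head_eigen f : head_eigen f -> lam ^+ n.+1 = char_prod.
Proof.
case=> hS hR [j hj fj]; have fheadE m : (m < T)%N -> fhead f m = f m.
  by move=> hm; rewrite /fhead hm.
have [l0 | l_neq0] := eqVneq lam 0.
  have N1_neq0 : N.-1 != 0%N by lia.
  have : mu j.+1 * aeval * f j = 0.
    by rewrite -fheadE // -hR // l0 expr0n (negPf N1_neq0) mul0r.
  move/eqP; rewrite mulf_eq0 (negPf fj) orbF => /eqP hz.
  rewrite l0 expr0n /=; apply/esym/eqP; rewrite prodf_seq_eq0; apply/hasP.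
  by exists j.+1; [rewrite mem_index_iota; lia | rewrite hz eqxx].
have := head_rec_iter hR T (leqnn T); rewrite /fhead ltnn mulrA -exprSr.
have [f0 _ | f0] := eqVneq (f 0%N) 0; last exact: mulIf.
have := head_rec_iter hR j (ltnW hj); rewrite fheadE // f0 mulr0 => /eqP.
by rewrite mulf_eq0 (negPf fj) orbF expf_eq0 (negPf l_neq0) andbF.
Qed.

Lemma head_eigen_of_char_eq0 : lam = 0 -> char_prod = 0 -> exists f, head_eigen f.
Proof.
move=> l0 /eqP; rewrite prodf_seq_eq0 => /hasP[k]; rewrite mem_index_iota => hk /eqP hz.
have N1_neq0 : N.-1 != 0%N by lia.
pose f i : F := (i == k.-1)%:R.
exists f; split.
- move=> [|q] j hj hb; first by rewrite addn0 mul1r.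
  rewrite l0 expr0n mul0r /f; case: eqP => //; rewrite mulSn; lia.
- move=> m hm; rewrite l0 expr0n (negPf N1_neq0) mul0r /fhead hm /f.
  case: eqP => [e | _]; last by rewrite mulr0.
  by rewrite e prednK ?hz ?mul0r //; lia.
- by exists k.-1; [lia | rewrite /f eqxx oner_neq0].
Qed.

Lemma head_eigen_of_char_eq : lam != 0 -> lam ^+ n.+1 = char_prod -> exists f, head_eigen f.
Proof.
move=> l_neq0 hC; have lX_neq0 k : lam ^+ k != 0 by exact: expf_neq0.
pose h m := (\prod_(1 <= k < m.+1) (mu k * aeval)) / lam ^+ (N.-1 * m).
pose f k := lam ^+ (k %/ T) * h (k %% T)%N.
have fE m : (m < T)%N -> f m = h m.
  by move=> hm; rewrite /f divn_small // modn_small // mul1r.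
have h0 : h 0%N = 1 by rewrite /h big_geq // muln0 divr1.
exists f; split.
- move=> q j hj _; rewrite (fE j hj) /f addnC divnMDl // modnMDl.
  by rewrite divn_small // modn_small // addn0.
- move=> m hm; rewrite /fhead hm (fE m hm); case: ifP => hm1.
    rewrite (fE _ hm1) /h [in LHS]big_nat_recr //= mulnS exprD; field.
    by rewrite !lX_neq0.
  have eT : T = m.+1 by lia.
  move: hC; rewrite (fE 0%N T_gt0) h0 mulr1 /h {1}eT big_nat_recr //= eT mulnS exprS exprD => hC.
  rewrite mulrA [mu m.+1 * aeval * _]mulrC -hC; field.
  by rewrite lX_neq0.
- by exists 0%N => //; rewrite fE // h0 oner_neq0.
Qed.

Lemma head_eigen_root : (exists f, head_eigen f) <-> lam ^+ n.+1 = char_prod.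
Proof.
split=> [[f /char_eq_of_head_eigen //] | hC].
have [l0 | l_neq0] := eqVneq lam 0; last exact: head_eigen_of_char_eq.
by apply: head_eigen_of_char_eq0 => //; rewrite -hC l0 expr0n.
Qed.

Lemma head_eigen_ext {f1 f2} : (forall k, (k <= n)%N -> f1 k = f2 k) ->
  head_eigen f1 -> head_eigen f2.
Proof.
move=> e12 [hS hR [j hj f1j]]; have Tn : (T <= n)%N by rewrite nE leq_addl.
have ej k : (k < T)%N -> f1 k = f2 k by move=> hk; apply: e12; lia.
have e0 : f1 0%N = f2 0%N by exact: ej.
have eh m : (m <= T)%N -> fhead f1 m = fhead f2 m.
  by move=> hm; rewrite /fhead; case: ifP => hmT; rewrite ?ej ?e0.
split.
- by move=> q k hk hb; rewrite -!e12 ?hS //; lia.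
- by move=> m hm; rewrite -!eh ?hR //; lia.
- by exists j; rewrite // -ej.
Qed.

Lemma shift_eq_head_neq0 {f k} : shift_eq f -> (k <= n)%N -> f k != 0 ->
  exists2 j, (j < T)%N & f j != 0.
Proof.
move=> hS hk; rewrite (divn_eq k T) addnC hS ?ltn_mod //; last by rewrite addnC -divn_eq.
by rewrite mulf_eq0 negb_or => /andP[_ fj]; exists (k %% T)%N; rewrite ?ltn_mod.
Qed.

Definition cvfun (w : 'cV[F]_n.+1) k := w (inord k) 0.

Lemma ebasis_mulmx w k : (ebasis n k *m w) 0 0 = cvfun w k.-1.
Proof. by rewrite -rowE mxE. Qed.

Lemma rrow_mulmx w m : (rrow N T a mu m *m w) 0 0 = rrow_eval (cvfun w) m.
Proof.
elim: m => [|m IH] /=; first exact: ebasis_mulmx.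
rewrite -scalemxAl mulmxDl -scalemxAl mulmx_suml mxE.
congr (_ * _); rewrite mxE mxE IH summxE; congr (_ + _).
by apply: eq_bigr => l _; rewrite -scalemxAl mxE ebasis_mulmx addnS.
Qed.

Lemma Jmat_mulmx w i : (Jmat N T a mu *m w) i 0 =
  if (i < (N - 2) * T + 1)%N then cvfun w (i + T) else rrow_eval (cvfun w) (i - (N - 2) * T).
Proof.
have -> : (Jmat N T a mu *m w) i 0 = (row i (Jmat N T a mu) *m w) 0 0.
  by rewrite -row_mul [RHS]mxE.
have -> : row i (Jmat N T a mu) = if (i < (N - 2) * T + 1)%N
    then ebasis n (i + 1 + T) else rrow N T a mu (i - (N - 2) * T).
  by apply/rowP => j; rewrite mxE [in LHS]mxE; case: ifP.
by case: ifP => _; rewrite ?rrow_mulmx // ebasis_mulmx addn1 addSn.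
Qed.

Lemma eigenvalue_Jmat_head : eigenvalue (Jmat N T a mu) lam <-> exists f, head_eigen f.
Proof.
rewrite eigenvalue_colP; split=> [[w Jw w_neq0] | [f hf]].
  have hE : eigen_eq (cvfun w).
    by move=> k hk; have := Jmat_mulmx w (inord k); rewrite inordK // Jw mxE => <-.
  have [hS hR] := (eigen_eqE (cvfun w)).1 hE.
  have [i wi] : exists i, w i 0 != 0.
    apply/existsP; apply: contraNT w_neq0 => /existsPn w0; apply/eqP/colP => i.
    by rewrite mxE; apply/eqP; have := w0 i; rewrite negbK.
  exists (cvfun w); split=> //; apply: (shift_eq_head_neq0 hS (leq_ord i)).
  by rewrite /cvfun inord_val.
pose w : 'cV[F]_n.+1 := \col_i f i.
have fw k : (k <= n)%N -> f k = cvfun w k by move=> hk; rewrite /cvfun mxE inordK.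
have [hS hR [j hj fj]] := head_eigen_ext fw hf.
have hE := (eigen_eqE (cvfun w)).2 (conj hS hR).
exists w.
  by apply/colP => i; rewrite Jmat_mulmx hE ?leq_ord // mxE /cvfun inord_val.
by apply: contraNneq fj => w0; rewrite /cvfun w0 mxE.
Qed.

Lemma root_pcharE : root (pchar N T a mu) lam = (lam ^+ n.+1 == char_prod).
Proof.
rewrite /root /pchar !hornerE horner_sum subr_eq0 big_split prodr_const_nat subSS subn0.
by congr (_ == _ * _ ^+ _); apply: eq_bigr => l _; rewrite hornerZ hornerXn.
Qed.

Lemma eigenvalue_Jmat : eigenvalue (Jmat N T a mu) lam <-> root (pchar N T a mu) lam.
Proof. by rewrite eigenvalue_Jmat_head head_eigen_root root_pcharE; split=> /eqP. Qed.

End JmatEigenvectors.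


Theorem lemma1 (R : realType) (N T : nat) (a mu : nat -> R) :
  (2 <= N)%N -> (1 <= T)%N ->
  \sum_(1 <= l < N.+1) a l = 1 ->
  forall lam : R[i],
    eigenvalue (map_mx (real_complex R) (Jmat N T a mu)) lam
    <-> root (map_poly (real_complex R) (pchar N T a mu)) lam.
Proof.
move=> N_ge2 T_gt0 _ lam; rewrite map_Jmat map_pchar; exact: eigenvalue_Jmat.
Qed.
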